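(* The log-exp-supremum is transitive: for all finite non-empty multi-sets $\mathcal X$ and $\mathcal Y$ of real symmetric $2\times2$ matrices, $$\mathrm{Sup}_{\mathrm{LE}}(\mathcal X\cup\mathcal Y)=\mathrm{Sup}_{\mathrm{LE}}\big(\{\mathrm{Sup}_{\mathrm{LE}}(\mathcal X),\mathrm{Sup}_{\mathrm{LE}}(\mathcal Y)\}\big),$$ where $\cup$ denotes multi-set union.
   Context: For a finite multi-set $\mathcal X=\{X_1,\dots,X_n\}$ of real symmetric $2\times2$ matrices, the log-exp-supremum is $\mathrm{Sup}_{\mathrm{LE}}(\mathcal X):=\lim_{m\to\infty}\frac1m\log\sum_{i=1}^n\exp(mX_i)$, with $\exp,\log$ the matrix exponential and logarithm. *)

From HB Require Import structures.
From mathcomp Require Import all_boot all_order all_algebra.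
From mathcomp Require Import all_classical all_reals all_analysis.
Set Implicit Arguments. Unset Strict Implicit. Unset Printing Implicit Defensive.
Import Order.TTheory GRing.Theory Num.Theory.
Import numFieldNormedType.Exports.
Local Open Scope classical_set_scope.
Local Open Scope ring_scope.

Definition symmetric2 {R : realType} (A : 'M[R]_2) : Prop := A^T = A.

Definition expm {R : realType} (A : 'M[R]_2) : 'M[R]_2 :=
  limn (series (fun k : nat => (k`!%:R)^-1 *: A ^+ k)).

(* matrix logarithm (of a positive definite symmetric matrix S): the
   (unique) real symmetric matrix L with exp(L) = S. *)
Definition logm {R : realType} (S : 'M[R]_2) : 'M[R]_2 :=
  get [set L : 'M[R]_2 | symmetric2 L /\ expm L = S].

Definition SupLE {R : realType} (X : seq 'M[R]_2) : 'M[R]_2 :=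
  limn (fun m : nat =>
          (m%:R)^-1 *: logm (\sum_(Xi <- X) expm (m%:R *: Xi))).

(* Write each symmetric matrix as [eigmx a b P], with [P] a rank-one projection, so that
   [expm (m X)] is the exponential path [eigmx (expR (m a)) (expR (m b)) P]. Call two sequences
   of matrices equivalent when their quadratic forms agree up to a constant factor, uniformly
   in [m]. A sum of two exponential paths is equivalent to a single one: the top eigenvalue and
   its projection survive, and the bottom eigenvalue is the largest competing one, because two
   distinct rank-one projections add up to a positive definite matrix. If [S m] is equivalent
   to the path of [Z], Courant-Fischer pins the eigenvalues of [logm (S m) / m] to those of [Z]
   up to [ln C / m] and its eigenprojection to that of [Z] up to [expR (- m gap / 2)], so
   [SupLE] of a multiset is the [Z] of its sum; transitivity follows from the additivity of the
   equivalence. *)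

From mathcomp Require Import all_boot all_order all_algebra.
From mathcomp Require Import all_classical all_reals all_analysis.
From mathcomp Require Import ring lra.
Import Order.TTheory GRing.Theory Num.Theory.
Import numFieldNormedType.Exports.
Set Implicit Arguments. Unset Strict Implicit.
Local Open Scope ring_scope.

Section TwoByTwo.
Variable R : realType.
Implicit Types (a b c d : R) (A B P Q : 'M[R]_2).

Lemma ord2 (i : 'I_2) : i = 0 \/ i = 1.
Proof. by case: i => [[|[|//]]] Hi; [left|right]; exact/val_inj. Qed.

Lemma mulmx2E A B i j : (A *m B) i j = A i 0 * B 0 j + A i 1 * B 1 j.
Proof.
rewrite mxE !big_ord_recl big_ord0 addr0.
have -> : lift ord0 ord0 = 1 :> 'I_2 by exact/val_inj.
by have -> : ord0 = 0 :> 'I_2 by exact/val_inj.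
Qed.

Lemma matrix2P A B :
  A 0 0 = B 0 0 -> A 0 1 = B 0 1 -> A 1 0 = B 1 0 -> A 1 1 = B 1 1 -> A = B.
Proof.
move=> h00 h01 h10 h11; apply/matrixP => i j.
by case: (ord2 i) => ->; case: (ord2 j) => ->.
Qed.

Lemma symmetric2_01 A : symmetric2 A -> A 0 1 = A 1 0.
Proof. by move=> h; rewrite -{1}h mxE. Qed.

(* Rank-one orthogonal projections: symmetric, trace 1, determinant 0. *)
Definition rank1_proj P :=
  [/\ P 1 0 = P 0 1, P 1 1 = 1 - P 0 0 & P 0 1 ^+ 2 = P 0 0 * (1 - P 0 0)].

Lemma rank1_projC P : rank1_proj P -> rank1_proj (1 - P).
Proof.
case=> h10 h11 hdet; rewrite /rank1_proj !mxE /= h10 h11.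
by split; nra.
Qed.

Lemma rank1_proj_bounds P : rank1_proj P -> 0 <= P 0 0 <= 1 /\ P 0 1 ^+ 2 <= 1.
Proof. case=> _ _ hdet; have := sqr_ge0 (P 0 1); split; [apply/andP; split|]; nra. Qed.

Lemma rank1_proj_eq P Q : rank1_proj P -> rank1_proj Q ->
  P 0 0 = Q 0 0 -> P 0 1 = Q 0 1 -> P = Q.
Proof.
case=> h10 h11 _ [g10 g11 _] e00 e01.
by apply: matrix2P; rewrite ?h10 ?g10 ?h11 ?g11 ?e00 ?e01.
Qed.

Definition eigmx a b P : 'M[R]_2 := a *: P + b *: (1 - P).

Lemma eigmxE a b P i j : eigmx a b P i j = a * P i j + b * ((i == j)%:R - P i j).
Proof. by rewrite !mxE. Qed.

Lemma eigmxC a b P : eigmx a b P = eigmx b a (1 - P).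
Proof. by apply/matrixP => i j; rewrite !eigmxE !mxE; ring. Qed.

Lemma eigmx_scalar a P : eigmx a a P = a%:M.
Proof. by apply/matrixP => i j; rewrite eigmxE !mxE; ring. Qed.

Lemma eigmx_shift a b P : eigmx a b P = b%:M + (a - b) *: P.
Proof. by apply/matrixP => i j; rewrite !mxE; ring. Qed.

Lemma eigmxD a b c d P : eigmx a b P + eigmx c d P = eigmx (a + c) (b + d) P.
Proof. by rewrite /eigmx !scalerDl addrACA. Qed.

Lemma scale_eigmx c a b P : c *: eigmx a b P = eigmx (c * a) (c * b) P.
Proof. by rewrite /eigmx scalerDr !scalerA. Qed.

Lemma eigmxB a b c d P Q :
  eigmx a b Q - eigmx c d P = eigmx (a - c) (b - d) Q + (c - d) *: (Q - P).
Proof. by apply/matrixP => i j; rewrite !mxE; ring. Qed.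

Lemma eigmx_sym a b P : rank1_proj P -> symmetric2 (eigmx a b P).
Proof. by case=> h10 _ _; apply: matrix2P; rewrite !mxE //= h10. Qed.

Lemma eigmxM a b c d P : rank1_proj P -> eigmx a b P * eigmx c d P = eigmx (a * c) (b * d) P.
Proof.
case=> h10 h11 hdet.
have hdet' : (a - b) * (c - d) * (P 0 1 ^+ 2 - P 0 0 * (1 - P 0 0)) = 0 by rewrite hdet subrr mulr0.
by apply: matrix2P; rewrite -mulmxE mulmx2E !eigmxE /= ?h10 ?h11; lra.
Qed.

Lemma eigmxX a b P k : rank1_proj P -> eigmx a b P ^+ k = eigmx (a ^+ k) (b ^+ k) P.
Proof.
move=> hP; elim: k => [|k IH]; first by rewrite !expr0 eigmx_scalar.
by rewrite exprS IH eigmxM // -!exprS.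
Qed.

Lemma eigmx_trace a b P : rank1_proj P -> eigmx a b P 0 0 + eigmx a b P 1 1 = a + b.
Proof. by case=> _ h11 _; rewrite !eigmxE /= h11; ring. Qed.

Lemma eigmx_det a b P : rank1_proj P ->
  eigmx a b P 0 0 * eigmx a b P 1 1 - eigmx a b P 0 1 * eigmx a b P 1 0 = a * b.
Proof.
case=> h10 h11 hdet.
have hdet' : (a - b) ^+ 2 * (P 0 1 ^+ 2 - P 0 0 * (1 - P 0 0)) = 0 by rewrite hdet subrr mulr0.
rewrite !eigmxE /= h10 h11; lra.
Qed.

Lemma spectral2 A : symmetric2 A -> exists a b P, [/\ rank1_proj P, b <= a & A = eigmx a b P].
Proof.
move=> /symmetric2_01 hA.
pose x := A 0 0; pose y := A 0 1; pose z := A 1 1.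
pose s := ((x - z) / 2) ^+ 2 + y ^+ 2.
pose d := Num.sqrt s.
have d2 : d ^+ 2 = s by rewrite sqr_sqrtr // addr_ge0 ?sqr_ge0.
have [d0|dn0] := eqVneq d 0.
  have /eqP : s = 0 by rewrite -d2 d0 expr0n.
  rewrite paddr_eq0 ?sqr_ge0 // !sqrf_eq0 mulf_eq0 invr_eq0 pnatr_eq0 orbF subr_eq0.
  move=> /andP[/eqP xz /eqP y0].
  exists x, x, (delta_mx 0 0); split => //.
    by split; rewrite !mxE //=; ring.
  by rewrite eigmx_scalar; apply: matrix2P; rewrite !mxE /= ?mulr1n ?mulr0n // -hA.
have d_gt0 : 0 < d by rewrite lt_def dn0 sqrtr_ge0.
have d2n0 : 2 * d != 0 by rewrite mulf_neq0 // pnatr_eq0.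
pose b := (x + z) / 2 - d.
have y2 : y ^+ 2 = d ^+ 2 - ((x - z) / 2) ^+ 2 by rewrite d2 /s; ring.
exists (b + 2 * d), b, ((2 * d)^-1 *: (A - b%:M)); split.
- split; rewrite !mxE /= ?mulr1n ?mulr0n ?subr0 -?hA //.
    by rewrite /b -/x -/z; field.
  by rewrite exprMn -/y y2 /b -/x; field.
- by rewrite lerDl mulr_ge0 // ltW.
- by rewrite eigmx_shift (addrC b) addrK scalerA mulfV // scale1r addrC subrK.
Qed.

Lemma expm_eigmx a b P : rank1_proj P -> expm (eigmx a b P) = eigmx (expR a) (expR b) P.
Proof.
move=> hP; rewrite /expm.
have -> : series (fun k : nat => (k`!%:R)^-1 *: eigmx a b P ^+ k) =
    (fun n => series (exp_coeff a) n *: P + series (exp_coeff b) n *: (1 - P)).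
  apply/funext => n; rewrite /series /= !scaler_suml -big_split /=.
  apply: eq_bigr => k _; rewrite eigmxX // scale_eigmx.
  by rewrite /exp_coeff /= ![_^-1 * _]mulrC.
apply: (cvg_lim (@norm_hausdorff _ _)).
by apply: cvgD; apply: cvgZr_tmp; exact: is_cvg_series_exp_coeff.
Qed.

Lemma eigmx_fun_eql a b c P Q : rank1_proj P -> rank1_proj Q ->
  eigmx a b Q = eigmx a c P -> forall f : R -> R, eigmx (f a) (f b) Q = eigmx (f a) (f c) P.
Proof.
move=> hP hQ E f.
have bc : b = c by move: (eigmx_trace a b hQ) (eigmx_trace a c hP); rewrite E => -> /addrI.
subst c.
have [<-|ab] := eqVneq a b; first by rewrite !eigmx_scalar.
move: E; rewrite !eigmx_shift => /(congr1 (fun M => (a - b)^-1 *: (M - b%:M))).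
by rewrite ![b%:M + _]addrC !addrK !scalerA mulVf ?subr_eq0 // !scale1r => ->.
Qed.

(* The functional calculus is well defined. *)
Lemma eigmx_fun_eq a b c d P Q : rank1_proj P -> rank1_proj Q ->
  eigmx a b Q = eigmx c d P -> forall f : R -> R, eigmx (f a) (f b) Q = eigmx (f c) (f d) P.
Proof.
move=> hP hQ E.
have tr : a + b = c + d by rewrite -(eigmx_trace a b hQ) -(eigmx_trace c d hP) E.
have det : a * b = c * d by rewrite -(eigmx_det a b hQ) -(eigmx_det c d hP) E.
have /eqP : (a - c) * (a - d) = 0.
  have : a * (a + b) = a * (c + d) by rewrite tr.
  lra.
rewrite mulf_eq0 !subr_eq0 => /orP[/eqP ac|/eqP ad] f.
  by subst c; exact: (eigmx_fun_eql hP hQ E f).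
subst d; rewrite [RHS]eigmxC; rewrite [RHS]eigmxC in E.
exact: (eigmx_fun_eql (rank1_projC hP) hQ E f).
Qed.

Lemma logm_eigmx a b P : 0 < a -> 0 < b -> rank1_proj P ->
  logm (eigmx a b P) = eigmx (ln a) (ln b) P.
Proof.
move=> a_gt0 b_gt0 hP; rewrite /logm.
have : exists L : 'M[R]_2, symmetric2 L /\ expm L = eigmx a b P.
  exists (eigmx (ln a) (ln b) P); split; first exact: eigmx_sym.
  by rewrite expm_eigmx // !lnK.
case/getPex; set L := get _ => /spectral2[l1 [l2 [Q [hQ _ ->]]]].
rewrite expm_eigmx // => E.
by have := eigmx_fun_eq hP hQ E (@ln R); rewrite !expRK.
Qed.

Definition qform A (u v : R) := A 0 0 * u ^+ 2 + (A 0 1 + A 1 0) * u * v + A 1 1 * v ^+ 2.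

Lemma qformD A B u v : qform (A + B) u v = qform A u v + qform B u v.
Proof. by rewrite /qform !mxE; ring. Qed.

Lemma qformZ c A u v : qform (c *: A) u v = c * qform A u v.
Proof. by rewrite /qform !mxE; ring. Qed.

Lemma qform_scalar c u v : qform c%:M u v = c * (u ^+ 2 + v ^+ 2).
Proof. by rewrite /qform !mxE /=; ring. Qed.

Lemma qformC P u v : qform (1 - P) u v = u ^+ 2 + v ^+ 2 - qform P u v.
Proof. by rewrite /qform !mxE /=; ring. Qed.

Lemma qform_eigmx a b P u v :
  qform (eigmx a b P) u v = a * qform P u v + b * (u ^+ 2 + v ^+ 2 - qform P u v).
Proof. by rewrite qformD !qformZ qformC. Qed.

Lemma qform_proj_ge0 P u v : rank1_proj P -> 0 <= qform P u v.
Proof.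
case=> h10 h11 hdet.
have -> : qform P u v = (P 0 0 * u + P 0 1 * v) ^+ 2 + (P 0 1 * u + (1 - P 0 0) * v) ^+ 2.
  have : (u ^+ 2 + v ^+ 2) * (P 0 1 ^+ 2 - P 0 0 * (1 - P 0 0)) = 0 by rewrite hdet subrr mulr0.
  by rewrite /qform h10 h11; lra.
by rewrite addr_ge0 ?sqr_ge0.
Qed.

Lemma qform_proj_le P u v : rank1_proj P -> qform P u v <= u ^+ 2 + v ^+ 2.
Proof. by move=> /rank1_projC /(qform_proj_ge0 u v); rewrite qformC subr_ge0. Qed.

Lemma qform_eigmx_bounds a b P u v : rank1_proj P -> b <= a ->
  b * (u ^+ 2 + v ^+ 2) <= qform (eigmx a b P) u v <= a * (u ^+ 2 + v ^+ 2).
Proof.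
move=> hP ba; have := qform_proj_ge0 u v hP; have := qform_proj_le u v hP.
rewrite qform_eigmx; set x := qform P u v; set n := u ^+ 2 + v ^+ 2 => x_le x_ge0.
by apply/andP; split; nra.
Qed.

Definition proj_dist2 P Q := (P 0 0 - Q 0 0) ^+ 2 + (P 0 1 - Q 0 1) ^+ 2.

Lemma proj_dist2_ge0 P Q : 0 <= proj_dist2 P Q.
Proof. by rewrite addr_ge0 ?sqr_ge0. Qed.

Lemma proj_dist2xx P : proj_dist2 P P = 0.
Proof. by rewrite /proj_dist2 !subrr expr0n /= addr0. Qed.

Lemma proj_dist2_gt0 P Q : rank1_proj P -> rank1_proj Q -> P != Q -> 0 < proj_dist2 P Q.
Proof.
move=> hP hQ; apply: contraNT; rewrite lt_def proj_dist2_ge0 andbT negbK.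
rewrite paddr_eq0 ?sqr_ge0 // !sqrf_eq0 !subr_eq0 => /andP[/eqP e00 /eqP e01].
by apply/eqP; exact: rank1_proj_eq.
Qed.

(* The kernel of [P] is spanned by [(1 - P00, -P01)], or by [(0, 1)] when [P00 = 1]. *)
Lemma proj_kernel_vector P : rank1_proj P -> exists u v, 0 < u ^+ 2 + v ^+ 2 /\
  forall Q, rank1_proj Q -> qform Q u v = (u ^+ 2 + v ^+ 2) * proj_dist2 Q P.
Proof.
move=> [h10 h11 hdet].
have [p1|p1] := eqVneq (P 0 0) 1.
  have p01 : P 0 1 = 0 by apply/eqP; rewrite -sqrf_eq0 hdet p1 subrr mulr0.
  exists 0, 1; split; first by rewrite expr0n /= add0r expr1n ltr01.
  move=> Q [g10 g11 gdet]; rewrite /qform /proj_dist2 p1 p01 g10 g11 expr0n expr1n /=; lra.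
have [/andP[p_ge0 p_le1] _] := rank1_proj_bounds (And3 h10 h11 hdet).
exists (1 - P 0 0), (- P 0 1); split.
  have : 0 < (1 - P 0 0) ^+ 2 by rewrite exprn_gt0 // lt_def subr_eq0 eq_sym p1 subr_ge0.
  by move=> ?; rewrite ltr_wpDr // sqr_ge0.
move=> Q [g10 g11 gdet].
have -> : (1 - P 0 0) ^+ 2 + (- P 0 1) ^+ 2 = 1 - P 0 0 by rewrite sqrrN hdet; ring.
have E1 : (1 - Q 0 0) * (P 0 1 ^+ 2 - P 0 0 * (1 - P 0 0)) = 0 by rewrite hdet subrr mulr0.
have E2 : (1 - P 0 0) * (P 0 1 ^+ 2 - P 0 0 * (1 - P 0 0)) = 0 by rewrite hdet subrr mulr0.
have E3 : (1 - P 0 0) * (Q 0 1 ^+ 2 - Q 0 0 * (1 - Q 0 0)) = 0 by rewrite gdet subrr mulr0.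
by rewrite /qform /proj_dist2 g10 g11; lra.
Qed.

Lemma proj_range_vector P : rank1_proj P -> exists u v, 0 < u ^+ 2 + v ^+ 2 /\
  qform P u v = u ^+ 2 + v ^+ 2.
Proof.
move=> hP; have [u [v [n_gt0 hker]]] := proj_kernel_vector (rank1_projC hP).
exists u, v; split => //; apply/eqP; rewrite eq_sym -subr_eq0 -qformC.
by have := hker _ (rank1_projC hP); rewrite proj_dist2xx mulr0 => ->.
Qed.

(* Trace-determinant bound for the positive semidefinite matrix [P + Q]. *)
Lemma proj_dist2_qform P Q u v : rank1_proj P -> rank1_proj Q ->
  proj_dist2 P Q * (u ^+ 2 + v ^+ 2) <= 2 * (qform P u v + qform Q u v).
Proof.
move=> [h10 h11 hdet] [g10 g11 gdet].
have E : 2 * (qform P u v + qform Q u v) - proj_dist2 P Q * (u ^+ 2 + v ^+ 2) =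
   ((P 0 0 + Q 0 0) * u + (P 0 1 + Q 0 1) * v) ^+ 2 +
   ((P 0 1 + Q 0 1) * u + (2 - P 0 0 - Q 0 0) * v) ^+ 2.
  have Ep : (u ^+ 2 + v ^+ 2) * (P 0 1 ^+ 2 - P 0 0 * (1 - P 0 0)) = 0 by rewrite hdet subrr mulr0.
  have Eq : (u ^+ 2 + v ^+ 2) * (Q 0 1 ^+ 2 - Q 0 0 * (1 - Q 0 0)) = 0 by rewrite gdet subrr mulr0.
  by rewrite /qform /proj_dist2 h10 h11 g10 g11; lra.
by rewrite -subr_ge0 E addr_ge0 ?sqr_ge0.
Qed.

(* Courant-Fischer in dimension two, tested on a range vector of [Q] and a kernel vector of [P]. *)
Lemma eigmx_qform_le s1 s2 t1 t2 P Q C : rank1_proj P -> rank1_proj Q ->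
  s2 <= s1 -> t2 <= t1 -> 0 <= s2 -> 0 <= C ->
  (forall u v, qform (eigmx s1 s2 Q) u v <= C * qform (eigmx t1 t2 P) u v) ->
  [/\ s1 <= C * t1, s2 <= C * t2 & s1 * proj_dist2 Q P <= C * t2].
Proof.
move=> hP hQ s21 t21 s2_ge0 C_ge0 hle.
have [u [v [n_gt0 hQu]]] := proj_range_vector hQ.
have [x [y [nx_gt0 hPx]]] := proj_kernel_vector hP.
have Px0 : qform P x y = 0 by rewrite hPx // proj_dist2xx mulr0.
have hTx : qform (eigmx t1 t2 P) x y = t2 * (x ^+ 2 + y ^+ 2) by rewrite qform_eigmx Px0; ring.
have /andP[hSx _] := qform_eigmx_bounds x y hQ s21.
have /andP[_ hTu] := qform_eigmx_bounds u v hP t21.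
split.
- have hSu : qform (eigmx s1 s2 Q) u v = s1 * (u ^+ 2 + v ^+ 2).
    by rewrite qform_eigmx hQu subrr mulr0 addr0.
  by rewrite -(ler_pM2r n_gt0) -mulrA -hSu (le_trans (hle u v)) // ler_wpM2l.
- by rewrite -(ler_pM2r nx_gt0) -mulrA -hTx (le_trans hSx).
- rewrite -(ler_pM2r nx_gt0) -[C * t2 * _]mulrA -hTx (le_trans _ (hle x y)) //.
  have := qform_proj_le x y hQ.
  rewrite qform_eigmx hPx // => hQx; nra.
Qed.

Definition psd_le (S T : nat -> 'M[R]_2) :=
  exists2 C, 0 < C & forall m u v, 0 <= qform (S m) u v <= C * qform (T m) u v.

Definition psd_equiv S T := psd_le S T /\ psd_le T S.

Lemma psd_le_refl S : (forall m u v, 0 <= qform (S m) u v) -> psd_le S S.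
Proof. by move=> S_ge0; exists 1 => // m u v; rewrite mul1r lexx andbT. Qed.

Lemma psd_le_trans S T U : psd_le S T -> psd_le T U -> psd_le S U.
Proof.
move=> [C C_gt0 hST] [D D_gt0 hTU]; exists (C * D); first exact: mulr_gt0.
move=> m u v; have /andP[hS0 hS] := hST m u v; have /andP[hT0 hT] := hTU m u v.
by rewrite hS0 (le_trans hS) // -mulrA ler_pM2l.
Qed.

Lemma psd_le_add S S' T T' : psd_le S S' -> psd_le T T' ->
  psd_le (fun m => S m + T m) (fun m => S' m + T' m).
Proof.
move=> [C C_gt0 hS] [D D_gt0 hT]; exists (C + D); first exact: addr_gt0.
move=> m u v; have /andP[hS0 hS1] := hS m u v; have /andP[hT0 hT1] := hT m u v.
have hS'0 : 0 <= qform (S' m) u v by rewrite -(pmulr_rge0 _ C_gt0) (le_trans hS0).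
have hT'0 : 0 <= qform (T' m) u v by rewrite -(pmulr_rge0 _ D_gt0) (le_trans hT0).
rewrite !qformD addr_ge0 //=.
move: hS1 hT1 hS'0 hT'0; set p := qform (S' m) u v; set q := qform (T' m) u v; nra.
Qed.

Lemma psd_equiv_trans S T U : psd_equiv S T -> psd_equiv T U -> psd_equiv S U.
Proof. by move=> [hST hTS] [hTU hUT]; split; apply: psd_le_trans; eassumption. Qed.

Lemma psd_equiv_add S S' T T' : psd_equiv S S' -> psd_equiv T T' ->
  psd_equiv (fun m => S m + T m) (fun m => S' m + T' m).
Proof. by move=> [hS hS'] [hT hT']; split; exact: psd_le_add. Qed.

Lemma psd_equiv_bound S T : psd_equiv S T -> exists2 C, 0 < C & forall m u v,
  qform (S m) u v <= C * qform (T m) u v /\ qform (T m) u v <= C * qform (S m) u v.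
Proof.
move=> [[C C_gt0 hST] [D D_gt0 hTS]]; exists (C + D); first exact: addr_gt0.
move=> m u v; have /andP[hS0 hS] := hST m u v; have /andP[hT0 hT] := hTS m u v.
by split; nra.
Qed.

Lemma psd_le_eigmx P (x y x' y' : nat -> R) C : rank1_proj P -> 0 < C ->
  (forall m, 0 <= x m <= C * x' m) -> (forall m, 0 <= y m <= C * y' m) ->
  psd_le (fun m => eigmx (x m) (y m) P) (fun m => eigmx (x' m) (y' m) P).
Proof.
move=> hP C_gt0 hx hy; exists C => // m u v.
have /andP[x0 x1] := hx m; have /andP[y0 y1] := hy m.
have p0 := qform_proj_ge0 u v hP; have p1 := qform_proj_le u v hP.
rewrite !qform_eigmx; set p := qform P u v in p0 p1 *; set n := u ^+ 2 + v ^+ 2 in p1 *.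
by apply/andP; split; nra.
Qed.

Definition exp_path a b P (m : nat) := eigmx (expR (m%:R * a)) (expR (m%:R * b)) P.

Lemma expm_exp_path a b P m : rank1_proj P -> expm (m%:R *: eigmx a b P) = exp_path a b P m.
Proof. by move=> hP; rewrite scale_eigmx expm_eigmx. Qed.

Lemma qform_exp_path_ge0 a b P m u v : rank1_proj P -> 0 <= qform (exp_path a b P m) u v.
Proof.
move=> hP; rewrite qform_eigmx -qformC.
by rewrite addr_ge0 // mulr_ge0 ?expR_ge0 // qform_proj_ge0 //; exact: rank1_projC.
Qed.

Lemma psd_equiv_exp_path a b P : rank1_proj P -> psd_equiv (exp_path a b P) (exp_path a b P).
Proof. by move=> hP; split; apply: psd_le_refl => m u v; exact: qform_exp_path_ge0. Qed.

Lemma expR_natM_max (m : nat) a b :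
  expR (m%:R * a) + expR (m%:R * b) <= 2 * expR (m%:R * Num.max a b) /\
  expR (m%:R * Num.max a b) <= expR (m%:R * a) + expR (m%:R * b).
Proof.
have ea := expR_ge0 (m%:R * a); have eb := expR_ge0 (m%:R * b).
have [ab|/ltW ba] := leP a b.
  have : expR (m%:R * a) <= expR (m%:R * b) by rewrite ler_expR ler_wpM2l.
  by split; lra.
have : expR (m%:R * b) <= expR (m%:R * a) by rewrite ler_expR ler_wpM2l.
by split; lra.
Qed.

Lemma exp_path_add_same a1 a2 b1 b2 P : rank1_proj P ->
  psd_equiv (fun m => exp_path a1 a2 P m + exp_path b1 b2 P m)
            (exp_path (Num.max a1 b1) (Num.max a2 b2) P).
Proof.
move=> hP; rewrite /exp_path; under eq_fun => m do rewrite eigmxD.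
have e_ge0 x (m : nat) := expR_ge0 (m%:R * x).
split; [apply: (@psd_le_eigmx _ _ _ _ _ 2) | apply: (@psd_le_eigmx _ _ _ _ _ 1)] => // m;
  have [le1 ge1] := expR_natM_max m a1 b1; have [le2 ge2] := expR_natM_max m a2 b2;
  by rewrite ?mul1r ?addr_ge0 ?e_ge0.
Qed.

Lemma exp_path_scalar a P m : exp_path a a P m = (expR (m%:R * a))%:M.
Proof. exact: eigmx_scalar. Qed.

(* Since [P + Q] is positive definite for [Q != P], the [Q]-term may be traded for a
   multiple of the identity. *)
Lemma exp_path_absorb a1 a2 b1 b2 P Q : rank1_proj P -> rank1_proj Q -> P != Q ->
  b2 <= b1 -> b1 <= a1 ->
  psd_equiv (fun m => exp_path a1 a2 P m + exp_path b1 b2 Q m)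
            (fun m => exp_path a1 a2 P m + exp_path b1 b1 P m).
Proof.
move=> hP hQ PQ b21 ba.
have d_gt0 := proj_dist2_gt0 hP hQ PQ.
pose k := 2 / proj_dist2 P Q.
have k_gt0 : 0 < k by rewrite divr_gt0.
have hk u v : u ^+ 2 + v ^+ 2 <= k * (qform P u v + qform Q u v).
  by rewrite /k mulrAC ler_pdivlMr // mulrC proj_dist2_qform.
have hb12 m : expR (m%:R * b2) <= expR (m%:R * b1) by rewrite ler_expR ler_wpM2l.
have hba m : expR (m%:R * b1) <= expR (m%:R * a1) by rewrite ler_expR ler_wpM2l.
pose F m u v := qform (exp_path a1 a2 P m + exp_path b1 b2 Q m) u v.
pose G m u v := qform (exp_path a1 a2 P m + exp_path b1 b1 P m) u v.
suff hFG m u v : [/\ 0 <= F m u v, F m u v <= G m u v & G m u v <= (1 + k) * F m u v].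
  split; [exists 1 | exists (1 + k)]; rewrite ?addr_gt0 // => m u v;
    have [F_ge0 FG GF] := hFG m u v; first by rewrite mul1r F_ge0.
  by rewrite GF (le_trans F_ge0).
rewrite /F /G !(qformD (exp_path _ _ _ m)) exp_path_scalar qform_scalar !qform_eigmx.
have := qform_proj_ge0 u v hP; have := qform_proj_le u v hP.
have := qform_proj_ge0 u v hQ; have := qform_proj_le u v hQ; have := hk u v.
have := expR_gt0 (m%:R * a1); have := expR_gt0 (m%:R * a2).
have := expR_gt0 (m%:R * b1); have := expR_gt0 (m%:R * b2); have := hb12 m; have := hba m.
set A1 := expR (_ * a1); set A2 := expR (_ * a2); set B1 := expR (_ * b1); set B2 := expR (_ * b2).
set x := qform P u v; set s := qform Q u v; set n := u ^+ 2 + v ^+ 2.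
move=> hBA hB21 B2_gt0 B1_gt0 A2_gt0 A1_gt0 hn s_le s_ge0 x_le x_ge0.
have hA1x := mulr_ge0 (ltW A1_gt0) x_ge0; have hB1s := mulr_ge0 (ltW B1_gt0) s_ge0.
have hB1n := mulr_ge0 (ltW B1_gt0) (le_trans x_ge0 x_le).
have hA2 : 0 <= A2 * (n - x) by rewrite mulr_ge0 ?subr_ge0 // ltW.
have hB2 : 0 <= B2 * (n - s) by rewrite mulr_ge0 ?subr_ge0 // ltW.
have hB21s : B2 * (n - s) <= B1 * (n - s) by rewrite ler_wpM2r ?subr_ge0.
have hBn : B1 * n <= k * (A1 * x + B1 * s).
  apply: (le_trans (ler_wpM2l (ltW B1_gt0) hn)); rewrite mulrCA ler_pM2l //.
  by rewrite mulrDr lerD2r ler_wpM2r.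
set p := A2 * (n - x) in hA2 *; set q := B2 * (n - s) in hB2 hB21s *.
have hkF : k * (A1 * x + B1 * s) <= k * (A1 * x + p + (B1 * s + q)).
  by rewrite ler_pM2l //; lra.
by rewrite mulrDl mul1r; split; lra.
Qed.

Lemma exp_path_add a1 a2 b1 b2 P Q : rank1_proj P -> rank1_proj Q -> a2 <= a1 -> b2 <= b1 ->
  exists c1 c2 S, [/\ rank1_proj S, c2 <= c1 &
    psd_equiv (fun m => exp_path a1 a2 P m + exp_path b1 b2 Q m) (exp_path c1 c2 S)].
Proof.
wlog ba : a1 a2 b1 b2 P Q / b1 <= a1.
  move=> hwlog hP hQ a21 b21; have [ba|/ltW ab] := leP b1 a1; first exact: hwlog.
  have [c1 [c2 [S [hS c21 hE]]]] := hwlog _ _ _ _ _ _ ab hQ hP b21 a21.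
  by exists c1, c2, S; split => //; under eq_fun => m do rewrite addrC.
move=> hP hQ a21 b21.
have [<-|PQ] := eqVneq P Q.
  exists (Num.max a1 b1), (Num.max a2 b2), P; split => //; last exact: exp_path_add_same.
  by rewrite ge_max !le_max a21 b21 orbT.
exists (Num.max a1 b1), (Num.max a2 b1), P; split => //.
  by rewrite ge_max !le_max a21 lexx orbT.
exact: psd_equiv_trans (exp_path_absorb a2 hP hQ PQ b21 ba) (exp_path_add_same _ _ _ _ hP).
Qed.

Definition expm_sum (X : seq 'M[R]_2) (m : nat) := \sum_(A <- X) expm (m%:R *: A).

Lemma expm_sum_exp_path X : X != [::] -> (forall A, A \in X -> symmetric2 A) ->
  exists c1 c2 P, [/\ rank1_proj P, c2 <= c1 & psd_equiv (expm_sum X) (exp_path c1 c2 P)].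
Proof.
elim: X => [//|A X IH] _ hX.
have [a1 [a2 [P [hP a21 ->]]]] := spectral2 (hX A (mem_head _ _)).
have expm_sumE (Y : seq 'M[R]_2) :
    expm_sum (eigmx a1 a2 P :: Y) = fun m => exp_path a1 a2 P m + expm_sum Y m.
  by apply/funext => m; rewrite /expm_sum big_cons expm_exp_path.
have [->|X0] := eqVneq X [::].
  exists a1, a2, P; split => //.
  rewrite expm_sumE /expm_sum; under eq_fun => m do rewrite big_nil addr0.
  exact: psd_equiv_exp_path.
have [b1 [b2 [Q [hQ b21 hXE]]]] := IH X0 (fun B hB => hX B (mem_behead (s := A :: X) hB)).
have [c1 [c2 [S [hS c21 hE]]]] := exp_path_add hP hQ a21 b21.
exists c1, c2, S; split => //; rewrite expm_sumE.
apply: psd_equiv_trans hE; apply: psd_equiv_add hXE.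
exact: psd_equiv_exp_path.
Qed.

Lemma expm_sum_sym X m : (forall A, A \in X -> symmetric2 A) -> symmetric2 (expm_sum X m).
Proof.
move=> hX; rewrite /symmetric2 /expm_sum raddf_sum /=; apply: eq_big_seq => A /hX.
by case/spectral2 => a [b [P [hP _ ->]]]; rewrite expm_exp_path //; exact: eigmx_sym.
Qed.

Lemma rank1_proj_entry_le P i j : rank1_proj P -> `|P i j| <= 1.
Proof.
move=> hP; have [/andP[p0 p1] hp01] := rank1_proj_bounds hP; case: hP => h10 h11 _.
have p01 : `|P 0 1| <= 1 by rewrite ler_norml; apply/andP; split; nra.
by case: (ord2 i) => ->; case: (ord2 j) => ->; rewrite ?h10 ?h11 // ger0_norm; lra.
Qed.

Lemma eigmx_entry_le a b P i j : rank1_proj P -> `|eigmx a b P i j| <= `|a| + `|b|.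
Proof.
move=> hP; rewrite eigmxE (le_trans (ler_normD _ _)) // !normrM.
rewrite lerD // ler_piMr //; first exact: rank1_proj_entry_le.
by have := rank1_proj_entry_le i j (rank1_projC hP); rewrite !mxE.
Qed.

Lemma rank1_proj_entry_dist P Q i j : rank1_proj P -> rank1_proj Q ->
  (Q i j - P i j) ^+ 2 <= proj_dist2 Q P.
Proof.
move=> [h10 h11 _] [g10 g11 _]; have := sqr_ge0 (Q 0 0 - P 0 0); have := sqr_ge0 (Q 0 1 - P 0 1).
rewrite /proj_dist2; case: (ord2 i) => ->; case: (ord2 j) => ->;
  by rewrite ?h10 ?h11 ?g10 ?g11; lra.
Qed.

Lemma ln_le_ratio (x y C : R) :
  0 < x -> 0 < y -> x <= C * y -> y <= C * x -> `|ln x - ln y| <= ln C.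
Proof.
move=> x_gt0 y_gt0 hxy hyx.
have C_gt0 : 0 < C by rewrite -(pmulr_lgt0 _ y_gt0) (lt_le_trans x_gt0).
have hpos z : 0 < z -> z \is Num.pos by [].
have h1 : ln x <= ln C + ln y by rewrite -lnM ?hpos // ler_ln ?hpos ?mulr_gt0.
have h2 : ln y <= ln C + ln x by rewrite -lnM ?hpos // ler_ln ?hpos ?mulr_gt0.
by rewrite ler_norml; apply/andP; split; lra.
Qed.

Lemma ln_div_sub_le (m : nat) (s c C : R) : (0 < m)%N -> 0 < s ->
  s <= C * expR (m%:R * c) -> expR (m%:R * c) <= C * s ->
  `|m%:R^-1 * ln s - c| <= ln C / m%:R.
Proof.
move=> m_gt0 s_gt0 hs he; have m_gt0' : 0 < m%:R :> R by rewrite ltr0n.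
have -> : m%:R^-1 * ln s - c = (ln s - ln (expR (m%:R * c))) / m%:R.
  by rewrite expRK; field; rewrite pnatr_eq0 -lt0n.
rewrite normrM normfV normr_nat ler_pM2r ?invr_gt0 //.
exact: ln_le_ratio s_gt0 (expR_gt0 _) hs he.
Qed.

Lemma logm_exp_path_entry_le c1 c2 P S C (m : nat) i j :
  rank1_proj P -> c2 <= c1 -> 0 < C -> symmetric2 S -> (0 < m)%N ->
  (forall u v, qform S u v <= C * qform (exp_path c1 c2 P m) u v /\
               qform (exp_path c1 c2 P m) u v <= C * qform S u v) ->
  `|(m%:R^-1 *: logm S - eigmx c1 c2 P) i j| <=
    2 * ln C / m%:R + (c1 - c2) * (C * expR ((c2 - c1) / 2) ^+ m).
Proof.
move=> hP c21 C_gt0 /spectral2[s1 [s2 [Q [hQ s21 ->]]]] m_gt0 hC.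
set E1 := expR (m%:R * c1); set E2 := expR (m%:R * c2).
have E21 : E2 <= E1 by rewrite ler_expR ler_wpM2l.
have [E1s E2s _] := eigmx_qform_le hQ hP E21 s21 (expR_ge0 _) (ltW C_gt0) (fun u v => (hC u v).2).
have s2_gt0 : 0 < s2 by rewrite -(pmulr_rgt0 _ C_gt0) (lt_le_trans (expR_gt0 _) E2s).
have s1_gt0 : 0 < s1 := lt_le_trans s2_gt0 s21.
have [s1E s2E dist_le] :=
  eigmx_qform_le hP hQ s21 E21 (ltW s2_gt0) (ltW C_gt0) (fun u v => (hC u v).1).
set w := expR ((c2 - c1) / 2).
have w_ge0 : 0 <= C * w ^+ m by rewrite mulr_ge0 ?exprn_ge0 ?expR_ge0 // ltW.
have hdist : proj_dist2 Q P <= (C * w ^+ m) ^+ 2.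
  have wE : (w ^+ m) ^+ 2 * E1 = E2.
    by rewrite /w -!expRM_natl -expRD /E2; congr expR; field.
  rewrite -(ler_pM2r (expR_gt0 (m%:R * c1))) -/E1 exprMn -mulrA wE.
  apply: le_trans (_ : C * s1 * proj_dist2 Q P <= _).
    by rewrite mulrC ler_wpM2r ?proj_dist2_ge0.
  by rewrite -mulrA expr2 -mulrA ler_pM2l.
have hQP : `|Q i j - P i j| <= C * w ^+ m.
  have := rank1_proj_entry_dist i j hP hQ; rewrite ler_norml => hsq.
  by apply/andP; split; nra.
rewrite logm_eigmx // scale_eigmx eigmxB [X in `|X|]mxE [X in `|_ + X|]mxE.
rewrite [X in `|_ + _ * X|]mxE.
apply: le_trans (ler_normD _ _) _; apply: lerD.
  apply: le_trans (eigmx_entry_le _ _ i j hQ) _.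
  have := ln_div_sub_le m_gt0 s1_gt0 s1E E1s; have := ln_div_sub_le m_gt0 s2_gt0 s2E E2s.
  by rewrite -!mulrA mulr2n; lra.
by rewrite normrM ger0_norm ?subr_ge0 // ler_wpM2l ?subr_ge0 // [X in `|_ + X|]mxE.
Qed.

Local Open Scope classical_set_scope.
Local Open Scope ring_scope.

Lemma cvg_invn : (fun m : nat => (m%:R : R)^-1) @ \oo --> 0.
Proof. by rewrite -cvg_shiftS; exact: cvg_harmonic. Qed.

Lemma cvg_mx_entry_le p q (F : nat -> 'M[R]_(p.+1, q.+1)) L (g : nat -> R) :
  g @ \oo --> 0 -> (\forall m \near \oo, forall i j, `|(F m - L) i j| <= g m) ->
  F @ \oo --> L.
Proof.
move=> g0 hFg; apply/subr_cvg0; apply: norm_cvg0.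
apply: (squeeze_cvgr _ (cvg_cst 0) g0); near=> m.
have hm : forall i j, `|(F m - L) i j| <= g m by near: m.
rewrite normr_ge0 /=.
change (mx_norm (F m - L) <= g m); rewrite mx_normrE; apply: bigmax_le => [|[i j] _].
  by have := hm 0 0; apply: le_trans.
exact: hm.
Unshelve. all: by end_near.
Qed.

Lemma SupLE_exp_path X c1 c2 P : rank1_proj P -> c2 <= c1 ->
  (forall A, A \in X -> symmetric2 A) -> psd_equiv (expm_sum X) (exp_path c1 c2 P) ->
  SupLE X = eigmx c1 c2 P.
Proof.
move=> hP c21 hX /psd_equiv_bound[C C_gt0 hC].
apply: (cvg_lim (@norm_hausdorff _ _)).
set w := expR ((c2 - c1) / 2).
apply: (@cvg_mx_entry_le _ _ _ _ (fun m => 2 * ln C / m%:R + (c1 - c2) * (C * w ^+ m))).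
  rewrite -[0]addr0; apply: cvgD; first by rewrite -(mulr0 (2 * ln C)); exact: cvgMl_tmp cvg_invn.
  have [<-|c12] := eqVneq c1 c2.
    by rewrite subrr; under eq_fun => m do rewrite mul0r; exact: cvg_cst.
  rewrite -(mulr0 (c1 - c2)) -(mulr0 C); apply: cvgMl_tmp; apply: cvgMl_tmp.
  apply: cvg_expr; rewrite gtr0_norm ?expR_gt0 // expR_lt1 pmulr_llt0 ?invr_gt0 //.
  by rewrite subr_lt0 lt_def c12.
near=> m => i j; apply: logm_exp_path_entry_le => //; [exact: expm_sum_sym | | exact: hC].
by near: m; exact: nbhs_infty_gt.
Unshelve. all: by end_near.
Qed.
End TwoByTwo.

Theorem proposition1 (R : realType) (X Y : seq 'M[R]_2) :
  X != [::] -> Y != [::] ->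
  (forall A, A \in X -> symmetric2 A) ->
  (forall A, A \in Y -> symmetric2 A) ->
  SupLE (X ++ Y) = SupLE [:: SupLE X; SupLE Y].
Proof.
move=> X0 Y0 hX hY.
have hXY A : A \in X ++ Y -> symmetric2 A by rewrite mem_cat => /orP[/hX|/hY].
have [a1 [a2 [P [hP a21 hXE]]]] := expm_sum_exp_path X0 hX.
have [b1 [b2 [Q [hQ b21 hYE]]]] := expm_sum_exp_path Y0 hY.
have [c1 [c2 [S [hS c21 hE]]]] := exp_path_add hP hQ a21 b21.
have hsum : psd_equiv (expm_sum (X ++ Y)) (exp_path c1 c2 S).
  apply: psd_equiv_trans hE; rewrite /expm_sum; under eq_fun => m do rewrite big_cat.
  exact: psd_equiv_add.
rewrite (SupLE_exp_path hS c21 hXY hsum) (SupLE_exp_path hP a21 hX hXE).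
rewrite (SupLE_exp_path hQ b21 hY hYE) (SupLE_exp_path hS c21) //.
  by move=> A; rewrite !inE => /orP[|] /eqP->; exact: eigmx_sym.
suff -> : expm_sum [:: eigmx a1 a2 P; eigmx b1 b2 Q] =
          fun m => exp_path a1 a2 P m + exp_path b1 b2 Q m by [].
by apply/funext => m; rewrite /expm_sum big_cons big_seq1 !expm_exp_path.
Qed.
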